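(* Let $a>0$, $\theta\in(0,\pi/2)$ and $\theta_0\in[\theta,\pi/2)$. For all $w\in\mathbb{C}$ with $w\neq0$ and $-\theta_0+\theta\le\mathrm{Arg}(w)\le\theta_0$, and all $s\in\mathbb{R}$, $$|R(w,\tau_\theta(s)-a)|^2\ge\cos(\theta_0)\big(|w|^2+|\tau_\theta(s)-a|^2\big)\ge\cos^2(\theta_0)\big(|w|^2+|\tau_\theta(s)-a|^2\big).$$ Further, there exists $C>0$ depending only on $a$ and $\theta$ such that, for all $s\in\mathbb{R}$ and all $w\neq0$ with $0\le\mathrm{Arg}(w)\le\theta$, $$\Im\big(R(w,\tau_\theta(s)-a)\big)\ge[\cos(\theta-\mathrm{Arg}(w))]^{1/2}\Im(w)-C\ge\cos(\theta-\mathrm{Arg}(w))\Im(w)-C.$$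
   Context: Square roots are principal ($\sqrt z=|z|^{1/2}e^{i\mathrm{Arg}(z)/2}$, $\mathrm{Arg}(z)\in(-\pi,\pi]$) and $R(\hat z,z)=(\hat z^2+z^2)^{1/2}$ for $\hat z,z\in\mathbb{C}$. $\tau_\theta(s)=-a+(s+a)e^{i\theta}$ for $s<-a$, $s$ for $|s|\le a$, $a+(s-a)e^{i\theta}$ for $s>a$. *)

From Stdlib Require Import Reals.
From Coquelicot Require Import Coquelicot.
Open Scope R_scope.

(* Principal argument Arg z in (-PI, PI], with Arg 0 = 0 (irrelevant here). *)
Definition Arg (z : C) : R :=
  let x := Re z in let y := Im z in
  if Rlt_dec 0 x then atan (y / x)
  else if Rlt_dec x 0 then
    (if Rle_dec 0 y then atan (y / x) + PI else atan (y / x) - PI)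
  else if Rlt_dec 0 y then PI / 2
  else if Rlt_dec y 0 then - (PI / 2)
  else 0.

Definition Csqrt (z : C) : C :=
  (sqrt (Cmod z) * cos (Arg z / 2), sqrt (Cmod z) * sin (Arg z / 2)).

Definition Rfun (zh z : C) : C := Csqrt (zh * zh + z * z).

Definition cexpi (t : R) : C := (cos t, sin t).

Definition tau (a theta s : R) : C :=
  if Rlt_dec s (- a) then (RtoC (- a) + RtoC (s + a) * cexpi theta)%C
  else if Rle_dec s a then RtoC s
  else (RtoC a + RtoC (s - a) * cexpi theta)%C.

From Stdlib Require Import Reals Lra Psatz.
From Coquelicot Require Import Coquelicot.
Open Scope R_scope.

(* Since [R(w, z)] only depends on [z^2] and [tau(s) - a = ±u] with [u = c + r e^{i theta}],
   [0 <= c <= 2a], [r >= 0], everything is about [Z = w^2 + u^2].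
   Modulus: [|Z|^2 = |w|^4 + |u|^4 + 2 Re ((w conj u)^2)], and [w conj u = c w + r w e^{-i theta}]
   lies in the convex sector [|arg| <= theta0], so [Re ((w conj u)^2) >= cos (2 theta0) |w|^2 |u|^2],
   which gives [|Z| >= cos theta0 (|w|^2 + |u|^2)].
   Imaginary part: [Z] lies in the upper half-plane, [2 (Im sqrt Z)^2 = |Z| - Re Z], and
   Cauchy-Schwarz against [conj w^2] gives [|w|^2 (Im sqrt Z)^2 >= Im w Im (Z conj w)
   >= (Im w)^2 (|w|^2 - c^2)], because [(u^2 - c^2) conj w = r e^{i theta} (2c + r e^{i theta}) conj w]
   has nonnegative imaginary part.  Hence [Im sqrt Z >= Im w - c >= Im w - 2a], so [C = 2a]. *)

Lemma sqrt_sum_sqr_factor (x y : R) : x <> 0 ->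
  sqrt (x ^ 2 + y ^ 2) = Rabs x * sqrt (1 + (y / x)²).
Proof.
  intro hx.
  replace (x ^ 2 + y ^ 2) with (Rabs x * Rabs x * (1 + (y / x)²)).
  - rewrite sqrt_mult_alt by (apply Rmult_le_pos; apply Rabs_pos).
    rewrite sqrt_square; [reflexivity | apply Rabs_pos].
  - rewrite <- Rabs_mult, Rabs_right by nra. unfold Rsqr. field. exact hx.
Qed.

Lemma Arg_polar (z : C) :
  Cmod z * cos (Arg z) = Re z /\ Cmod z * sin (Arg z) = Im z.
Proof.
  destruct z as [x y]. unfold Cmod, Arg, Re, Im; simpl fst; simpl snd.
  assert (hS : forall u, 0 < sqrt (1 + u²)).
  { intro u. apply sqrt_lt_R0. pose proof (Rle_0_sqr u). lra. }
  destruct (Rlt_dec 0 x) as [hx|hx].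
  - rewrite sqrt_sum_sqr_factor, Rabs_right, cos_atan, sin_atan by lra.
    specialize (hS (y / x)). split; field_simplify; try lra; field; lra.
  - destruct (Rlt_dec x 0) as [hx'|hx'].
    + rewrite sqrt_sum_sqr_factor, Rabs_left by lra. specialize (hS (y / x)).
      destruct (Rle_dec 0 y).
      * rewrite neg_cos, neg_sin, cos_atan, sin_atan.
        split; field_simplify; try lra; field; lra.
      * replace (atan (y / x) - PI) with (atan (y / x) + PI - 2 * PI) by ring.
        rewrite cos_minus, sin_minus, cos_2PI, sin_2PI, neg_cos, neg_sin, cos_atan, sin_atan.
        split; field_simplify; try lra; field; lra.
    + assert (x = 0) by lra. subst x.
      replace (0 ^ 2 + y ^ 2) with (Rabs y * Rabs y)
        by (rewrite <- Rabs_mult, Rabs_right; nra).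
      rewrite sqrt_square by apply Rabs_pos.
      destruct (Rlt_dec 0 y); [|destruct (Rlt_dec y 0)].
      * rewrite cos_PI2, sin_PI2, Rabs_right by lra. lra.
      * rewrite cos_neg, sin_neg, cos_PI2, sin_PI2, Rabs_left by lra. lra.
      * assert (y = 0) by lra. subst y. rewrite cos_0, sin_0, Rabs_R0. lra.
Qed.

Lemma polar_Arg (z : C) : z = (Cmod z * cexpi (Arg z))%C.
Proof.
  destruct (Arg_polar z) as [hre him].
  apply injective_projections; simpl; unfold Re, Im in *; lra.
Qed.

Lemma atan_nonneg (u : R) : 0 <= u -> 0 <= atan u.
Proof.
  intro hu. destruct (Req_dec u 0) as [->|hu0]; [rewrite atan_0; lra|].
  rewrite <- atan_0. left. apply atan_increasing. lra.
Qed.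

Lemma Arg_bounds_of_Im_nonneg (z : C) : 0 <= Im z -> 0 <= Arg z <= PI.
Proof.
  destruct z as [x y]. unfold Arg, Re, Im; simpl fst; simpl snd. intro hy.
  pose proof PI_RGT_0. pose proof (atan_bound (y / x)).
  destruct (Rlt_dec 0 x) as [hx|hx].
  - assert (0 <= atan (y / x)); [apply atan_nonneg, Rdiv_le_0_compat|]; lra.
  - destruct (Rlt_dec x 0) as [hx'|hx'].
    + destruct (Rle_dec 0 y); [|lra].
      assert (0 <= atan (- (y / x))); [|rewrite atan_opp in *; lra].
      apply atan_nonneg. unfold Rdiv. rewrite Ropp_mult_distr_r, <- Rinv_opp.
      apply Rmult_le_pos; [lra|]. left. apply Rinv_0_lt_compat. lra.
    + destruct (Rlt_dec 0 y); [lra|]. destruct (Rlt_dec y 0); lra.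
Qed.

Lemma Im_nonneg_of_Arg (z : C) : 0 <= Arg z <= PI -> 0 <= Im z.
Proof.
  intro hA. destruct (Arg_polar z) as [_ <-].
  apply Rmult_le_pos; [apply Cmod_ge_0 | apply sin_ge_0; lra].
Qed.

Lemma Cmod_Csqrt_sqr (z : C) : Cmod (Csqrt z) ^ 2 = Cmod z.
Proof.
  rewrite Cmod2_alt. unfold Csqrt, Re, Im; simpl fst; simpl snd.
  rewrite !Rpow_mult_distr, pow2_sqrt by apply Cmod_ge_0.
  rewrite <- Rmult_plus_distr_l, Rplus_comm, <- !Rsqr_pow2, sin2_cos2. ring.
Qed.

Lemma Im_Csqrt_sqr (z : C) : 0 <= Im z ->
  0 <= Im (Csqrt z) /\ 2 * Im (Csqrt z) ^ 2 = Cmod z - Re z.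
Proof.
  intro hz. pose proof (Arg_bounds_of_Im_nonneg z hz) as hA.
  destruct (Arg_polar z) as [<- _].
  unfold Csqrt, Im at 1 2; simpl snd. split.
  - apply Rmult_le_pos; [apply sqrt_pos | apply sin_ge_0; lra].
  - replace (Arg z) with (2 * (Arg z / 2)) at 2 by field.
    rewrite cos_2a_sin, Rpow_mult_distr, pow2_sqrt by apply Cmod_ge_0. ring.
Qed.

(* For [0 <= t0 <= PI / 2]: [z] lies in the closed sector [|arg z| <= t0]. *)
Definition in_sector (t0 : R) (z : C) : Prop := cos t0 * Rabs (Im z) <= sin t0 * Re z.

Lemma in_sector_polar (t0 rho phi : R) :
  0 <= rho -> - t0 <= phi <= t0 -> t0 <= PI / 2 -> in_sector t0 (rho * cexpi phi).
Proof.
  intros hrho hphi ht0. pose proof PI_RGT_0.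
  assert (h1 : 0 <= sin (t0 - phi)) by (apply sin_ge_0; lra).
  assert (h2 : 0 <= sin (t0 + phi)) by (apply sin_ge_0; lra).
  rewrite sin_minus in h1. rewrite sin_plus in h2.
  unfold in_sector, cexpi, Re, Im; simpl.
  rewrite !Rmult_0_l, Rplus_0_r, Rminus_0_r, Rabs_mult, (Rabs_right rho) by lra.
  unfold Rabs. destruct (Rcase_abs (sin phi)); nra.
Qed.

Lemma in_sector_add (t0 : R) (z1 z2 : C) : 0 <= cos t0 ->
  in_sector t0 z1 -> in_sector t0 z2 -> in_sector t0 (z1 + z2).
Proof.
  unfold in_sector, Re, Im; simpl. intros hk h1 h2.
  pose proof (Rabs_triang (snd z1) (snd z2)). nra.
Qed.

Lemma sector_mul_conj_ray (t0 theta c r : R) (w : C) :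
  0 <= c -> 0 <= r -> 0 <= theta -> theta - t0 <= Arg w <= t0 -> t0 <= PI / 2 ->
  in_sector t0 (w * Cconj (c + r * cexpi theta)).
Proof.
  intros hc hr hth hA ht0. pose proof PI_RGT_0.
  rewrite (polar_Arg w).
  replace (Cmod w * cexpi (Arg w) * Cconj (c + r * cexpi theta))%C
    with (RtoC (Cmod w * c) * cexpi (Arg w) + RtoC (Cmod w * r) * cexpi (Arg w - theta))%C.
  - pose proof (Cmod_ge_0 w).
    apply in_sector_add; [apply cos_ge_0; lra | |];
      apply in_sector_polar; try lra; apply Rmult_le_pos; lra.
  - unfold cexpi. rewrite cos_minus, sin_minus.
    apply injective_projections; simpl; ring.
Qed.

Lemma Cmod_sqr_add_sqr_ge (t0 : R) (w v : C) : in_sector t0 (w * Cconj v) ->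
  cos t0 * (Cmod w ^ 2 + Cmod v ^ 2) <= Cmod (w * w + v * v).
Proof.
  unfold in_sector. intro hsec.
  pose proof (Cmod_ge_0 w). pose proof (Cmod_ge_0 v).
  destruct (Rlt_or_le (cos t0) 0) as [hk|hk].
  { pose proof (Cmod_ge_0 (w * w + v * v)). nra. }
  set (p := Re (w * Cconj v)) in *. set (q := Im (w * Cconj v)) in *.
  assert (hpq : p ^ 2 + q ^ 2 = Cmod w ^ 2 * Cmod v ^ 2)
    by (unfold p, q; rewrite <- Cmod2_alt, Cmod_mult, Cmod_conj; ring).
  assert (hmod : Cmod (w * w + v * v) ^ 2
                 = (Cmod w ^ 2) ^ 2 + (Cmod v ^ 2) ^ 2 + 2 * (p ^ 2 - q ^ 2)).
  { unfold p, q. rewrite !Cmod2_alt.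
    destruct w as [x y], v as [x' y']. unfold Re, Im; simpl. ring. }
  assert (hsq : cos t0 ^ 2 * q ^ 2 <= sin t0 ^ 2 * p ^ 2).
  { rewrite <- (pow2_abs q), <- !Rpow_mult_distr.
    pose proof (Rabs_pos q). apply pow_incr. nra. }
  replace (sin t0 ^ 2) with (1 - cos t0 ^ 2) in hsq
    by (pose proof (sin2_cos2 t0) as h; rewrite !Rsqr_pow2 in h; lra).
  apply Rsqr_incr_0_var; [rewrite !Rsqr_pow2, hmod | apply Cmod_ge_0].
  (* the difference is [sin t0 ^ 2 (|w|^2 - |v|^2) ^ 2 + 2 (sin t0 ^ 2 p ^ 2 - cos t0 ^ 2 q ^ 2)] *)
  assert (0 <= (1 - cos t0 ^ 2) * (Cmod w ^ 2 - Cmod v ^ 2) ^ 2).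
  { pose proof (COS_bound t0). apply Rmult_le_pos; [nra | apply pow2_ge_0]. }
  nra.
Qed.

Lemma Im_Csqrt_sqr_mul_ge (z w : C) : 0 <= Im z ->
  Im w * Im (z * Cconj w) <= Cmod w ^ 2 * Im (Csqrt z) ^ 2.
Proof.
  intro hz. destruct (Im_Csqrt_sqr z hz) as [_ hq].
  assert (hcs : Re (z * Cconj (w * w)) <= Cmod z * Cmod w ^ 2).
  { pose proof (re_le_Cmod (z * Cconj (w * w))) as h.
    rewrite Cmod_mult, Cmod_conj, Cmod_mult in h.
    pose proof (Rle_abs (Re (z * Cconj (w * w)))). nra. }
  assert (hid : Re (z * Cconj (w * w)) - Cmod w ^ 2 * Re z = 2 * Im w * Im (z * Cconj w)).
  { rewrite Cmod2_alt. destruct z as [x y], w as [x' y']. unfold Re, Im; simpl. ring. }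
  nra.
Qed.

Lemma sub_le_of_sqr_bound (y rho c q : R) :
  0 <= y <= rho -> 0 <= c -> 0 <= q -> y ^ 2 * (rho ^ 2 - c ^ 2) <= rho ^ 2 * q ^ 2 ->
  y - c <= q.
Proof.
  intros hy hc hq h.
  destruct (Rle_or_lt y c) as [hyc|hyc]; [lra|].
  apply Rsqr_incr_0_var; [unfold Rsqr | lra].
  assert (hrho : 0 < rho ^ 2) by nra.
  apply (Rmult_le_reg_l (rho ^ 2)); [lra|].
  (* [rho^2 (y - c)^2 <= y^2 (rho^2 - c^2)] reduces to [c (rho^2 (2y - c) - y^2 c) >= 0] *)
  assert (0 <= (rho ^ 2 - y ^ 2) * (2 * y - c)) by (apply Rmult_le_pos; nra).
  assert (0 <= c * (2 * y ^ 2 * (y - c))) by (apply Rmult_le_pos; [lra | nra]).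
  nra.
Qed.

Lemma Im_Csqrt_add_sqr_ge (w v : C) (c : R) :
  0 <= c -> 0 <= Im w -> 0 <= Im (w * w + v * v) -> 0 <= Im ((v * v - c * c) * Cconj w) ->
  Im w - c <= Im (Csqrt (w * w + v * v)).
Proof.
  intros hc hw hz hd.
  pose proof (Im_Csqrt_sqr_mul_ge _ w hz) as hb.
  assert (hid : Im ((w * w + v * v) * Cconj w)
                = Im w * (Cmod w ^ 2 - c ^ 2) + Im ((v * v - c * c) * Cconj w)).
  { rewrite Cmod2_alt. destruct w as [x y], v as [x' y']. unfold Re, Im; simpl. ring. }
  apply sub_le_of_sqr_bound with (Cmod w); try lra.
  - split; [lra|]. pose proof (Cmod2_alt w). apply Rsqr_incr_0_var; [|apply Cmod_ge_0].
    rewrite !Rsqr_pow2. nra.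
  - apply Im_Csqrt_sqr. exact hz.
  - nra.
Qed.

Lemma Im_sqr_add_ray_sqr_nonneg (w : C) (c r theta : R) :
  0 <= c -> 0 <= r -> 0 <= Arg w <= theta -> theta <= PI / 2 ->
  0 <= Im (w * w + (c + r * cexpi theta) * (c + r * cexpi theta)).
Proof.
  intros hc hr hA hth. pose proof PI_RGT_0.
  destruct (Arg_polar w) as [hx hy]. pose proof (Cmod_ge_0 w).
  assert (0 <= cos (Arg w)) by (apply cos_ge_0; lra).
  assert (0 <= sin (Arg w)) by (apply sin_ge_0; lra).
  assert (0 <= cos theta) by (apply cos_ge_0; lra).
  assert (0 <= sin theta) by (apply sin_ge_0; lra).
  assert (0 <= Re w) by (rewrite <- hx; apply Rmult_le_pos; lra).
  assert (0 <= Im w) by (rewrite <- hy; apply Rmult_le_pos; lra).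
  replace (Im _) with (2 * Re w * Im w + 2 * (c + r * cos theta) * (r * sin theta))
    by (unfold cexpi, Re, Im; simpl; ring).
  apply Rplus_le_le_0_compat; apply Rmult_le_pos; try apply Rmult_le_pos; nra.
Qed.

Lemma Im_ray_sqr_sub_mul_conj_nonneg (w : C) (c r theta : R) :
  0 <= c -> 0 <= r -> 0 <= Arg w <= theta -> theta <= PI / 2 ->
  0 <= Im (((c + r * cexpi theta) * (c + r * cexpi theta) - c * c) * Cconj w).
Proof.
  intros hc hr hA hth. pose proof PI_RGT_0. pose proof (Cmod_ge_0 w).
  rewrite (polar_Arg w).
  (* [(u^2 - c^2) conj w = |w| (2 c r e^{i(theta - Arg w)} + r^2 e^{i(2 theta - Arg w)})] *)
  replace (Im _) with (Cmod w * (2 * c * r * sin (theta - Arg w)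
                                 + r ^ 2 * sin (2 * theta - Arg w))).
  - assert (0 <= sin (theta - Arg w)) by (apply sin_ge_0; lra).
    assert (0 <= sin (2 * theta - Arg w)) by (apply sin_ge_0; lra).
    apply Rmult_le_pos; [lra|]. apply Rplus_le_le_0_compat; apply Rmult_le_pos; nra.
  - rewrite !sin_minus, sin_2a, cos_2a. unfold cexpi; simpl. ring.
Qed.

Lemma tau_sub_cases (a theta s : R) : 0 <= a ->
  exists c r : R, 0 <= c <= 2 * a /\ 0 <= r /\
    (tau a theta s - a = - (c + r * cexpi theta) \/ tau a theta s - a = c + r * cexpi theta)%C.
Proof.
  intro ha. unfold tau.
  destruct (Rlt_dec s (- a)); [| destruct (Rle_dec s a)].
  - exists (2 * a), (- (s + a)). repeat split; try lra. left.
    apply injective_projections; simpl; ring.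
  - exists (a - s), 0. repeat split; try lra. left.
    apply injective_projections; simpl; ring.
  - exists 0, (s - a). repeat split; try lra. right.
    apply injective_projections; simpl; ring.
Qed.

Lemma Rfun_tau_sub (a theta s : R) (w : C) : 0 <= a ->
  exists c r : R, 0 <= c <= 2 * a /\ 0 <= r /\
    let u := (c + r * cexpi theta)%C in
    Rfun w (tau a theta s - a) = Csqrt (w * w + u * u) /\ Cmod (tau a theta s - a) = Cmod u.
Proof.
  intro ha. destruct (tau_sub_cases a theta s ha) as (c & r & hc & hr & hz).
  exists c, r. repeat split; try lra; unfold Rfun;
    destruct hz as [-> | ->]; rewrite ?Cmod_opp; try f_equal; ring.
Qed.

Lemma sqrt_ge_id_le_1 (x : R) : 0 <= x <= 1 -> x <= sqrt x <= 1.
Proof.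
  intro hx. pose proof (sqrt_sqrt x (proj1 hx)). pose proof (sqrt_pos x).
  assert (sqrt x <= 1) by (rewrite <- sqrt_1; apply sqrt_le_1_alt; lra).
  split; nra.
Qed.

Theorem lemmaB5 (a theta : R) (ha : 0 < a) (hth : 0 < theta < PI / 2) :
  (forall theta0 : R, theta <= theta0 < PI / 2 ->
   forall (w : C) (s : R), w <> 0%C ->
     - theta0 + theta <= Arg w <= theta0 ->
     let z := (tau a theta s - RtoC a)%C in
     (Cmod (Rfun w z)) ^ 2 >= cos theta0 * ((Cmod w) ^ 2 + (Cmod z) ^ 2) /\
     cos theta0 * ((Cmod w) ^ 2 + (Cmod z) ^ 2)
       >= (cos theta0) ^ 2 * ((Cmod w) ^ 2 + (Cmod z) ^ 2)) /\
  (exists Cst : R, 0 < Cst /\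
   forall (s : R) (w : C), w <> 0%C -> 0 <= Arg w <= theta ->
     let z := (tau a theta s - RtoC a)%C in
     Im (Rfun w z) >= sqrt (cos (theta - Arg w)) * Im w - Cst /\
     sqrt (cos (theta - Arg w)) * Im w - Cst >= cos (theta - Arg w) * Im w - Cst).
Proof.
  pose proof PI_RGT_0. split.
  - intros t0 ht0 w s _ hA z.
    destruct (Rfun_tau_sub a theta s w) as (c & r & hc & hr & hR & hz); [lra|].
    unfold z. rewrite hR, hz, Cmod_Csqrt_sqr.
    pose proof (Cmod_sqr_add_sqr_ge t0 w _ (sector_mul_conj_ray t0 theta c r w (proj1 hc) hr
                  ltac:(lra) ltac:(lra) ltac:(lra))).
    assert (0 <= cos t0 <= 1) by (split; [apply cos_ge_0 | apply COS_bound]; lra).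
    split; [lra|]. apply Rle_ge, Rmult_le_compat_r; [|nra].
    pose proof (pow2_ge_0 (Cmod w)). pose proof (pow2_ge_0 (Cmod (c + r * cexpi theta))). lra.
  - exists (2 * a). split; [lra|]. intros s w _ hA z.
    destruct (Rfun_tau_sub a theta s w) as (c & r & hc & hr & hR & _); [lra|].
    unfold z. rewrite hR.
    assert (hw : 0 <= Im w) by (apply Im_nonneg_of_Arg; lra).
    pose proof (Im_Csqrt_add_sqr_ge w _ c (proj1 hc) hw
                  (Im_sqr_add_ray_sqr_nonneg w c r theta (proj1 hc) hr hA ltac:(lra))
                  (Im_ray_sqr_sub_mul_conj_nonneg w c r theta (proj1 hc) hr hA ltac:(lra))).
    assert (hk : 0 <= cos (theta - Arg w) <= 1) by (split; [apply cos_ge_0 | apply COS_bound]; lra).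
    pose proof (sqrt_ge_id_le_1 _ hk).
    split; nra.
Qed.
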